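(* Let $q$ be a prime power, $\mathcal{H}_q$ the Hermitian curve over $\mathbb{F}_{q^2}$ with $g=g(\mathcal{H}_q)=\frac{q(q-1)}{2}$, and $X,T$ fixed positive integers. Consider the $X$-secure, $T$-private PIR schemes with rate $\frac{L}{N}$, $N=L+X+T+3q^2-q-2$, obtained from the Hermitian construction for the admissible values of $L$, namely those $L$ with $L+g\equiv 0\pmod q$ for which the required points fit in $\mathcal{H}_q(\mathbb{F}_{q^2})$, i.e. $q^3+1\ge 2L+X+T+4q^2-2q$. Then the maximum rate of these schemes is $\mathcal{R}^{\mathcal{H}_q}_{\max}=\frac{L}{N}$ with $L=mq-g$ and $$m=\left\lfloor\frac{q^3-3q^2+q+1-(X+T)}{2q}\right\rfloor .$$
   Context: The Hermitian curve $\mathcal{H}_q$ is the curve over $\mathbb{F}_{q^2}$ with affine equation $X^{q+1}=Y^q+Y$; it has exactly $q^3+1$ $\mathbb{F}_{q^2}$-rational points, $P_\infty$ denotes its point at infinity and $P_0=(0,0)$. The Hermitian construction: for $L$ with $L+g\equiv 0\pmod q$, $m=(L+g)/q$, one uses $mq$ affine rational points $P_{i,z}=(\alpha_i,\beta_{i,z})$ ($\alpha_i\ne0$ distinct, $i\in[m]$, $z\in[q]$), the points $P_\infty,P_0$, and $L+X+T+\frac{7q^2-3q-6}{2}+1$ further rational points distinct from these, yielding an $X$-secure and $T$-private information retrieval scheme with $N=L+X+T+3q^2-q-2$ servers and rate $L/N$. The total number of rational points needed is $2L+X+T+4q^2-2q$. *)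

From mathcomp Require Import all_boot all_order all_algebra.
Set Implicit Arguments. Unset Strict Implicit. Unset Printing Implicit Defensive.
Import Order.TTheory GRing.Theory Num.Theory.

Definition herm_genus (q : nat) : nat := (q * (q - 1)) %/ 2.

Definition herm_N (q X T L : nat) : nat := L + X + T + 3 * q ^ 2 - q - 2.

Definition herm_rate (q X T L : nat) : rat := (L%:R / (herm_N q X T L)%:R)%R.

(* admissible L: positive, L + g = 0 mod q, and the needed
   2L + X + T + 4q^2 - 2q rational points fit in the q^3 + 1 points of H_q *)
Definition herm_admissible (q X T L : nat) : bool :=
  [&& 0 < L, q %| L + herm_genus q & 2 * L + X + T + 4 * q ^ 2 - 2 * q <= q ^ 3 + 1].

Definition herm_m (q X T : nat) : int :=
  ((((q ^ 3)%:Z - 3 * (q ^ 2)%:Z + q%:Z + 1 - (X + T)%:Z)%R) %/ (2 * q)%:Z)%Z.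

Definition prime_power (q : nat) : Prop := exists p k, prime p /\ 0 < k /\ q = p ^ k.

(* Write every admissible L as L = kq - g.  Since 2g = q^2 - q, the point count
   2L + X + T + 4q^2 - 2q <= q^3 + 1 becomes 2qk <= q^3 - 3q^2 + q + 1 - (X + T),
   i.e. k <= m.  So the admissible L are bounded by mq - g, which is itself
   admissible, and the rate L / (L + c) increases with L. *)

From mathcomp Require Import all_boot all_order all_algebra.
From mathcomp Require Import zify.
Set Implicit Arguments. Unset Strict Implicit. Unset Printing Implicit Defensive.
Import Order.TTheory GRing.Theory Num.Theory.

Lemma ler_ratio_addn (R : numFieldType) (c a b : nat) : a <= b ->
  (a%:R / (a + c)%:R <= b%:R / (b + c)%:R :> R)%R.
Proof.
case: a => [|a] le_ab; first by rewrite mul0r divr_ge0.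
have b_gt0 : 0 < b by apply: leq_trans le_ab.
rewrite ler_pdivrMr ?ltr0n ?addn_gt0 ?b_gt0 // mulrAC.
rewrite ler_pdivlMr ?ltr0n ?addn_gt0 ?b_gt0 // -!natrM ler_nat.
by rewrite !mulnDr [b * _]mulnC leq_add2l leq_mul2r le_ab orbT.
Qed.

Lemma herm_genus_double q : 2 * herm_genus q + q = q ^ 2.
Proof.
rewrite /herm_genus mulnC divnK; last first.
  by case: q => // n; rewrite subn1 dvdn2 oddM /= andNb.
by case: q => // n; rewrite subn1 /= expnS expn1; lia.
Qed.

Definition herm_num (q X T : nat) : int :=
  ((q ^ 3)%:Z - 3 * (q ^ 2)%:Z + q%:Z + 1 - (X + T)%:Z)%R.

Lemma herm_mE q X T : herm_m q X T = (herm_num q X T %/ (2 * q)%:Z)%Z.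
Proof. by []. Qed.

Lemma herm_points_fitE q X T L k : L + herm_genus q = k * q ->
  (2 * L + X + T + 4 * q ^ 2 - 2 * q <= q ^ 3 + 1)
  = (k%:Z * (2 * q)%:Z <= herm_num q X T)%R.
Proof.
move=> def_k; have := herm_genus_double q.
rewrite -PoszM /herm_num => dbl_g.
apply/idP/idP; lia.
Qed.

Section Admissible.

Variables q X T : nat.
Hypothesis q_gt0 : 0 < q.

Let two_q_gt0 : (0 < (2 * q)%:Z)%R.
Proof. by rewrite ltz_nat muln_gt0. Qed.

Lemma herm_admissible_le L : herm_admissible q X T L ->
  ((L + herm_genus q)%:Z <= herm_m q X T * q%:Z)%R.
Proof.
case/and3P=> _ /dvdnP[k def_k]; rewrite (herm_points_fitE X T def_k) => fit.
rewrite def_k PoszM ler_pM2r ?ltz_nat // herm_mE.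
by rewrite lez_divRL.
Qed.

Lemma herm_admissible_top m : herm_m q X T = Posz m -> herm_genus q < m * q ->
  herm_admissible q X T (m * q - herm_genus q).
Proof.
move=> def_m g_lt; have def_L : m * q - herm_genus q + herm_genus q = m * q.
  by rewrite subnK // ltnW.
apply/and3P; split; first by rewrite subn_gt0.
  by rewrite def_L dvdn_mull.
rewrite (herm_points_fitE X T def_L) -def_m herm_mE.
by rewrite lez_floor // gt_eqF.
Qed.

Lemma herm_rate_le L L' : L <= L' ->
  (herm_rate q X T L <= herm_rate q X T L')%R.
Proof.
have herm_NE n : herm_N q X T n = n + (X + T + 3 * q ^ 2 - q - 2).
  by rewrite /herm_N; nia.
by rewrite /herm_rate !herm_NE; apply: ler_ratio_addn.
Qed.

End Admissible.

Theorem proposition3p5 (q X T : nat) :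
  prime_power q -> 0 < X -> 0 < T ->
  (exists L, herm_admissible q X T L) ->
  exists L : nat,
    [/\ herm_admissible q X T L,
        Posz L = (herm_m q X T * Posz q - Posz (herm_genus q))%R &
        forall L', herm_admissible q X T L' ->
          (herm_rate q X T L' <= herm_rate q X T L)%R].
Proof.
move=> [p [k [p_pr [_ def_q]]]] _ _ [L0 adm_L0].
have q_gt0 : 0 < q by rewrite def_q expn_gt0 prime_gt0.
have L0_le := herm_admissible_le q_gt0 adm_L0.
have [m def_m] : exists m : nat, herm_m q X T = Posz m.
  case E: (herm_m q X T) => [m|m]; first by exists m.
  by move: L0_le; rewrite E; lia.
have g_lt : herm_genus q < m * q.
  by move: L0_le; case/and3P: adm_L0; rewrite def_m; lia.
exists (m * q - herm_genus q); split.
- exact: herm_admissible_top.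
- by rewrite def_m -PoszM subzn // ltnW.
- move=> L' /(herm_admissible_le q_gt0); rewrite def_m => L'_le.
  by apply: herm_rate_le => //; lia.
Qed.
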